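(* Let $i\in I$ and $k\in\mathbb{Z}$. \begin{enumerate} \item[(i)] Let $u\in\widehat{\mathcal{A}}_{[k+1]}$ be a homogeneous element with $e^\star_i(u)=0$. Then $f_{i,k}u=q^{-(\mathrm{wt}(f_{i,k}),\mathrm{wt}(u))}uf_{i,k}$. \item[(ii)] Let $v\in\widehat{\mathcal{A}}_{[k-1]}$ be a homogeneous element with $e'_i(v)=0$. Then $vf_{i,k}=q^{-(\mathrm{wt}(f_{i,k}),\mathrm{wt}(v))}f_{i,k}v$. \end{enumerate}
   Context: Let $\mathsf{C}=(c_{i,j})_{i,j\in I}$ be a finite-type Cartan matrix with simple roots $\alpha_i$, coroots $h_i$, symmetric form $(\alpha_i,\alpha_j)=\mathsf{d}_ic_{i,j}$ ($\min\mathsf{d}_i=1$), $q_i=q^{\mathsf{d}_i}$, $\mathbf{k}=\mathbb{Q}(q^{1/2})$. $\widehat{\mathcal{A}}$ is the bosonic extension generated by $f_{i,p}$ ($i\in I,p\in\mathbb{Z}$) with quantum Serre relations among $\{f_{i,p}\}_{i\in I}$ for fixed $p$, $f_{i,m}f_{j,p}=q_i^{(-1)^{p-m+1}c_{i,j}}f_{j,p}f_{i,m}$ ($p>m+1$), $f_{i,p}f_{j,p+1}=q_i^{c_{i,j}}f_{j,p+1}f_{i,p}+\delta_{i,j}(1-q_i^2)$, graded by $\mathrm{wt}(f_{i,p})=(-1)^{p+1}\alpha_i$. $\widehat{\mathcal{A}}_{[k]}$ is the subalgebra generated by $f_{i,k}$ ($i\in I$), identified with $\mathcal{U}_q^-(\mathfrak{g})$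 via $f_{i,k}\mapsto f_i$; through this, the $q$-derivations $e'_i,e^\star_i$ of $\mathcal{U}_q^-(\mathfrak{g})$ act on it, where $e'_i(f_j)=e^\star_i(f_j)=\delta_{i,j}$, $e'_i(xy)=e'_i(x)y+q_i^{\langle h_i,\mathrm{wt}(x)\rangle}xe'_i(y)$, $e^\star_i(xy)=xe^\star_i(y)+q_i^{\langle h_i,\mathrm{wt}(y)\rangle}e^\star_i(x)y$. *)

From HB Require Import structures.
From mathcomp Require Import all_boot all_order all_algebra.
From mathcomp Require Import fraction.
Set Implicit Arguments. Unset Strict Implicit. Unset Printing Implicit Defensive.
Import Order.TTheory GRing.Theory Num.Theory.
Local Open Scope ring_scope.

Definition kfield : fieldType := {fraction {poly rat}}.
(* qh = q^{1/2}, a transcendental generator *)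
Definition qh : kfield := tofrac ('X : {poly rat}).
Definition q : kfield := qh ^+ 2.
Definition qi (I : Type) (d : I -> nat) (i : I) : kfield := q ^+ d i.

Record is_finite_cartan (I : finType) (C : I -> I -> int) (d : I -> nat) : Prop := {
  cartan_diag : forall i, C i i = 2;
  cartan_offdiag : forall i j, i != j -> C i j <= 0;
  cartan_symmetrizable : forall i j, (d i)%:Z * C i j = (d j)%:Z * C j i;
  symm_pos : forall i, (0 < d i)%N;
  symm_min : exists i, d i = 1%N;
  cartan_posdef : forall x : I -> rat, (exists i, x i != 0) ->
     0 < \sum_(a : I) \sum_(b : I) x a * (d a)%:R * (C a b)%:~R * x b }.

(* the symmetric form (lambda, mu) on the root lattice Z^I,
   (alpha_a, alpha_b) = d_a c_{a,b} *)
Definition rform (I : finType) (C : I -> I -> int) (d : I -> nat)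
  (la mu : I -> int) : int :=
  \sum_(a : I) \sum_(b : I) la a * (d a)%:Z * C a b * mu b.

(** * Free (noncommutative) algebra over k on a set X of generators,
    elements are formal linear combinations of words *)
Definition ncpoly (X : Type) := seq (kfield * seq X).

Definition nccoef (X : eqType) (p : ncpoly X) (w : seq X) : kfield :=
  \sum_(t <- p | t.2 == w) t.1.
Definition ncword (X : Type) (w : seq X) : ncpoly X := [:: (1, w)].
Definition ncconst (X : Type) (c : kfield) : ncpoly X := [:: (c, [::])].
Definition ncadd (X : Type) (p r : ncpoly X) : ncpoly X := p ++ r.
Definition ncscale (X : Type) (c : kfield) (p : ncpoly X) : ncpoly X :=
  [seq (c * t.1, t.2) | t <- p].
Definition ncmul (X : Type) (p r : ncpoly X) : ncpoly X :=
  [seq (a.1 * b.1, a.2 ++ b.2) | a <- p, b <- r].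
Definition ncsub (X : Type) (p r : ncpoly X) : ncpoly X := p ++ ncscale (-1) r.

(* p lies in the two-sided ideal generated by the relations R:
   p = sum_t c_t * a_t * r_t * b_t  with words a_t, b_t and r_t in R *)
Definition in_ideal (X : eqType) (R : ncpoly X -> Prop) (p : ncpoly X) : Prop :=
  exists l : seq (kfield * seq X * ncpoly X * seq X),
    (forall t, t \in l -> R t.1.2) /\
    forall w, nccoef p w =
      nccoef (flatten [seq ncscale t.1.1.1
                          (ncmul (ncmul (ncword t.1.1.2) t.1.2) (ncword t.2))
                      | t <- l]) w.

Definition nceqmod (X : eqType) (R : ncpoly X -> Prop) (p r : ncpoly X) : Prop :=
  in_ideal R (ncsub p r).

Definition qint (a : kfield) (n : nat) : kfield := (a ^+ n - a ^- n) / (a - a^-1).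
Definition qfact (a : kfield) (n : nat) : kfield := \prod_(1 <= m < n.+1) qint a m.
Definition qbinom (a : kfield) (n r : nat) : kfield :=
  qfact a n / (qfact a r * qfact a (n - r)).

(* quantum Serre element for generators g : I -> X, i <> j:
   sum_{r=0}^{1-c_ij} (-1)^r [1-c_ij choose r]_{q_i} g_i^{1-c_ij-r} g_j g_i^r *)
Definition serre_rel (I : Type) (X : Type) (C : I -> I -> int) (d : I -> nat)
  (g : I -> X) (i j : I) : ncpoly X :=
  let m := absz (1 - C i j) in
  flatten [seq ncscale ((-1) ^+ r * qbinom (qi d i) m r)
                 (ncword (nseq (m - r) (g i) ++ g j :: nseq r (g i)))
          | r <- iota 0 m.+1].

(** * U_q^-(g): generators f_i (i in I), quantum Serre relations *)
Definition RU (I : finType) (C : I -> I -> int) (d : I -> nat) (p : ncpoly I) : Prop :=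
  exists i j, i != j /\ p = serre_rel C d id i j.

(** * The bosonic extension \hat A: generators f_{i,p} = (i,p) *)
Definition RA (I : finType) (C : I -> I -> int) (d : I -> nat)
  (p : ncpoly (I * int)) : Prop :=
  (exists (k : int) (i j : I), i != j /\ p = serre_rel C d (fun a => (a, k)) i j)
  \/ (exists (i j : I) (m r : int), m + 1 < r /\
        p = ncsub (ncword [:: (i, m); (j, r)])
                  (ncscale (qi d i ^ ((-1) ^+ absz (r - m + 1) * C i j))
                           (ncword [:: (j, r); (i, m)])))
  \/ (exists (i j : I) (m : int),
        p = ncsub (ncword [:: (i, m); (j, m + 1)])
                  (ncadd (ncscale (qi d i ^ C i j) (ncword [:: (j, m + 1); (i, m)]))
                         (ncconst _ (if i == j then 1 - qi d i ^+ 2 else 0)))).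

(* weight of f_{i,p} is (-1)^{p+1} alpha_i, as an element of Z^I *)
Definition wtA (I : finType) (g : I * int) : I -> int :=
  fun a => if g.1 == a then (if odd (absz g.2) then 1 else -1) else 0.
Definition wt_word (I : finType) (w : seq (I * int)) : I -> int :=
  fun a => \sum_(g <- w) wtA g a.
Definition homogeneous (I : finType) (p : ncpoly (I * int)) (ga : I -> int) : Prop :=
  forall w, nccoef p w != 0 -> forall a, wt_word w a = ga a.

(* identification U_q^- ~ \hat A_[k], f_j |-> f_{j,k} *)
Definition phi (I : Type) (k : int) (x : ncpoly I) : ncpoly (I * int) :=
  [seq (t.1, [seq (j, k) | j <- t.2]) | t <- x].

(** * q-derivations e'_i, e*_i on the free algebra (they preserve the Serre
    ideal, hence descend to U_q^-).  wt(f_j) = -alpha_j in U_q^-. *)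
Definition eprime_word (I : finType) (C : I -> I -> int) (d : I -> nat) (i : I)
  (w : seq I) : ncpoly I :=
  [seq (qi d i ^ (- \sum_(t <- take s w) C i t), take s w ++ drop s.+1 w)
  | s <- filter (fun s => nth i w s == i) (iota 0 (size w))].
Definition estar_word (I : finType) (C : I -> I -> int) (d : I -> nat) (i : I)
  (w : seq I) : ncpoly I :=
  [seq (qi d i ^ (- \sum_(t <- drop s.+1 w) C i t), take s w ++ drop s.+1 w)
  | s <- filter (fun s => nth i w s == i) (iota 0 (size w))].
Definition eprime (I : finType) (C : I -> I -> int) (d : I -> nat) (i : I)
  (p : ncpoly I) : ncpoly I :=
  flatten [seq ncscale t.1 (eprime_word C d i t.2) | t <- p].
Definition estar (I : finType) (C : I -> I -> int) (d : I -> nat) (i : I)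
  (p : ncpoly I) : ncpoly I :=
  flatten [seq ncscale t.1 (estar_word C d i t.2) | t <- p].

(* In the bosonic extension, f_{i,k} moves past f_{j,k+1} at the cost of the
   factor q_i^{c_ij}, plus the constant 1 - q_i^2 when j = i.  Moving f_{i,k}
   across a monomial u of level k+1 therefore gives q_i^{-<h_i, wt u>} u f_{i,k}
   plus one term for each occurrence of f_i in u, namely u with that letter
   deleted; up to the common factor (q_i^{-2} - 1) q_i^{-<h_i, wt u>} their
   coefficients are exactly those of e^*_i(u).  On a homogeneous element this
   factor is the constant q^{-(wt f_{i,k}, wt u)}, so the correction is a
   multiple of e^*_i(u) = 0.  Part (ii) is the mirror argument, moving f_{i,k}
   leftwards across level k-1, with e'_i in place of e^*_i. *)

From HB Require Import structures.
From mathcomp Require Import all_boot all_order all_algebra.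
From mathcomp Require Import fraction ring.
Set Implicit Arguments. Unset Strict Implicit. Unset Printing Implicit Defensive.
Import Order.TTheory GRing.Theory Num.Theory.
Local Open Scope ring_scope.

(* Since an [ncpoly] is an unnormalised list of terms, equalities are checked
   by pairing with an arbitrary function [G] on words: two polynomials have the
   same coefficients iff they have the same pairing with every [G]. *)
Definition ncpair (X : Type) (p : ncpoly X) (G : seq X -> kfield) : kfield :=
  \sum_(t <- p) t.1 * G t.2.

Definition ncequiv (X : eqType) (p r : ncpoly X) : Prop :=
  forall w, nccoef p w = nccoef r w.

Definition nclin (X Y : Type) (L : seq Y -> ncpoly X) (p : ncpoly Y) : ncpoly X :=
  flatten [seq ncscale t.1 (L t.2) | t <- p].

Definition lmul_word (X : Type) (u : seq X) (p : ncpoly X) : ncpoly X :=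
  [seq (t.1, u ++ t.2) | t <- p].
Definition rmul_word (X : Type) (p : ncpoly X) (u : seq X) : ncpoly X :=
  [seq (t.1, t.2 ++ u) | t <- p].

Definition ideal_comb (X : Type) (l : seq (kfield * seq X * ncpoly X * seq X)) :
    ncpoly X :=
  flatten [seq ncscale t.1.1.1 (ncmul (ncmul (ncword t.1.1.2) t.1.2) (ncword t.2))
          | t <- l].

Section Pairing.
Variable X : Type.
Implicit Types (p r : ncpoly X) (G : seq X -> kfield).

Lemma eq_ncpair p G G' : G =1 G' -> ncpair p G = ncpair p G'.
Proof. by move=> eqG; apply: eq_bigr => t _; rewrite eqG. Qed.

Lemma ncpair_cat p r G : ncpair (p ++ r) G = ncpair p G + ncpair r G.
Proof. exact: big_cat. Qed.

Lemma ncpair_scale c p G : ncpair (ncscale c p) G = c * ncpair p G.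
Proof. by rewrite /ncpair big_map mulr_sumr; apply: eq_bigr => t _; rewrite mulrA. Qed.

Lemma ncpair_sub p r G : ncpair (ncsub p r) G = ncpair p G - ncpair r G.
Proof. by rewrite ncpair_cat ncpair_scale mulN1r. Qed.

Lemma ncpair_word w G : ncpair (ncword w) G = G w.
Proof. by rewrite /ncpair big_seq1 mul1r. Qed.

Lemma ncpair_const c G : ncpair (ncconst X c) G = c * G [::].
Proof. exact: big_seq1. Qed.

Lemma ncpair_map (Y : Type) (m : seq X -> seq Y) p (G : seq Y -> kfield) :
  ncpair [seq (t.1, m t.2) | t <- p] G = ncpair p (G \o m).
Proof. exact: big_map. Qed.

Lemma ncpairDr p G G' : ncpair p (fun v => G v + G' v) = ncpair p G + ncpair p G'.
Proof. by rewrite /ncpair -big_split; apply: eq_bigr => t _; rewrite mulrDr. Qed.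

Lemma ncpairZr p c G : ncpair p (fun v => c * G v) = c * ncpair p G.
Proof. by rewrite /ncpair mulr_sumr; apply: eq_bigr => t _; rewrite mulrCA. Qed.

Lemma ncpair_mul p r G :
  ncpair (ncmul p r) G = ncpair p (fun u => ncpair r (fun v => G (u ++ v))).
Proof.
elim: p => [|a p IH]; first by rewrite /ncpair !big_nil.
rewrite /ncmul /= ncpair_cat -/(ncmul p r) IH /ncpair big_cons big_map mulr_sumr.
by congr (_ + _); apply: eq_bigr => b _; rewrite mulrA.
Qed.

Lemma ncpair_mull u p G :
  ncpair (ncmul (ncword u) p) G = ncpair p (fun v => G (u ++ v)).
Proof. by rewrite ncpair_mul ncpair_word. Qed.

Lemma ncpair_mulr p u G :
  ncpair (ncmul p (ncword u)) G = ncpair p (fun v => G (v ++ u)).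
Proof. by rewrite ncpair_mul; apply: eq_ncpair => v; rewrite ncpair_word. Qed.

Lemma ncpair_lmul u p G : ncpair (lmul_word u p) G = ncpair p (fun v => G (u ++ v)).
Proof. exact: big_map. Qed.

Lemma ncpair_rmul p u G : ncpair (rmul_word p u) G = ncpair p (fun v => G (v ++ u)).
Proof. exact: big_map. Qed.

Lemma ncpair_lin (Y : Type) (L : seq Y -> ncpoly X) (p : ncpoly Y) G :
  ncpair (nclin L p) G = ncpair p (fun v => ncpair (L v) G).
Proof.
elim: p => [|t p IH]; first by rewrite /ncpair !big_nil.
by rewrite /= ncpair_cat IH ncpair_scale /ncpair big_cons.
Qed.

Lemma ncpair_ideal_comb l G : ncpair (ideal_comb l) G =
  \sum_(t <- l) t.1.1.1 * ncpair t.1.2 (fun v => G (t.1.1.2 ++ v ++ t.2)).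
Proof.
elim: l => [|t l IH]; first by rewrite /ncpair !big_nil.
rewrite /= ncpair_cat IH ncpair_scale ncpair_mulr ncpair_mull big_cons.
by congr (_ * _ + _); apply: eq_ncpair => v; rewrite catA.
Qed.

End Pairing.

Section Coefficients.
Variable X : eqType.
Implicit Types (p r : ncpoly X) (G : seq X -> kfield).

Lemma nccoefE p w : nccoef p w = ncpair p (fun v => (v == w)%:R).
Proof.
rewrite /nccoef /ncpair big_mkcond /=; apply: eq_bigr => t _.
by case: eqP; rewrite ?mulr1 ?mulr0.
Qed.

Lemma ncpair_coef p (s : seq (seq X)) G : uniq s -> {subset map snd p <= s} ->
  ncpair p G = \sum_(u <- s) nccoef p u * G u.
Proof.
move=> s_uniq; elim: p => [|t p IH] p_s.
  by rewrite /ncpair big_nil big1 // => u _; rewrite /nccoef big_nil mul0r.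
have t_s : t.2 \in s by apply: p_s; rewrite inE eqxx.
rewrite /ncpair big_cons -/(ncpair p G) IH => [|y yp]; last first.
  by apply: p_s; rewrite inE yp orbT.
rewrite [RHS](eq_bigr (fun u => (if t.2 == u then t.1 * G u else 0) + nccoef p u * G u)).
  rewrite big_split /= -big_mkcond; congr (_ + _).
  rewrite -big_filter (@eq_filter _ _ (pred1 t.2)) => [|u]; last exact: eq_sym.
  by rewrite filter_pred1_uniq // big_seq1.
by move=> u _; rewrite /nccoef big_cons; case: ifP; rewrite ?add0r // mulrDl.
Qed.

Lemma ncequivP p r : ncequiv p r <-> forall G, ncpair p G = ncpair r G.
Proof.
split=> [eq_pr G | eq_pair w]; last by rewrite !nccoefE eq_pair.
have s_uniq := undup_uniq (map snd p ++ map snd r).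
rewrite (ncpair_coef G s_uniq) => [|y yp]; last by rewrite mem_undup mem_cat yp.
rewrite (ncpair_coef G s_uniq) => [|y yr]; last by rewrite mem_undup mem_cat yr orbT.
by apply: eq_bigr => u _; rewrite eq_pr.
Qed.

Lemma ncpair_homog p (Q : seq X -> kfield) Q0 G :
  (forall v, nccoef p v != 0 -> Q v = Q0) ->
  ncpair p (fun v => Q v * G v) = Q0 * ncpair p G.
Proof.
move=> homQ; have s_uniq := undup_uniq (map snd p).
rewrite !(ncpair_coef _ s_uniq) => [|y|y]; rewrite ?mem_undup // mulr_sumr.
apply: eq_bigr => u _; have [->|nz] := eqVneq (nccoef p u) 0.
  by rewrite !mul0r mulr0.
by rewrite homQ // mulrCA.
Qed.

End Coefficients.

Section Ideal.
Variables (X : eqType) (R : ncpoly X -> Prop).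
Implicit Types (p r : ncpoly X).

Lemma in_idealP p :
  in_ideal R p <->
  exists2 l, (forall t, t \in l -> R t.1.2) & ncequiv p (ideal_comb l).
Proof. by split=> [[l [lR e]] | [l lR e]]; exists l. Qed.

Lemma in_ideal_equiv p r : ncequiv p r -> in_ideal R p -> in_ideal R r.
Proof.
by move=> e_pr /in_idealP[l lR e]; apply/in_idealP; exists l => // w; rewrite -e_pr.
Qed.

Lemma in_ideal_rel r : R r -> in_ideal R r.
Proof.
move=> Rr; apply/in_idealP; exists [:: (1, [::], r, [::])] => [t|].
  by rewrite inE => /eqP ->.
apply/ncequivP => G; rewrite ncpair_ideal_comb big_seq1 mul1r.
by apply: eq_ncpair => v; rewrite cats0.
Qed.

Lemma in_ideal_cat p r : in_ideal R p -> in_ideal R r -> in_ideal R (p ++ r).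
Proof.
move=> /in_idealP[l1 lR1 /ncequivP e1] /in_idealP[l2 lR2 /ncequivP e2].
apply/in_idealP; exists (l1 ++ l2) => [t|].
  by rewrite mem_cat => /orP[/lR1 | /lR2].
by apply/ncequivP => G; rewrite /ideal_comb map_cat flatten_cat !ncpair_cat e1 e2.
Qed.

Lemma in_ideal_scale c p : in_ideal R p -> in_ideal R (ncscale c p).
Proof.
move=> /in_idealP[l lR /ncequivP e]; apply/in_idealP.
exists [seq (c * t.1.1.1, t.1.1.2, t.1.2, t.2) | t <- l] => [t /mapP[t' /lR ? ->] //|].
apply/ncequivP => G; rewrite ncpair_scale e !ncpair_ideal_comb big_map mulr_sumr.
by apply: eq_bigr => t _; rewrite mulrA.
Qed.

Lemma in_ideal_lmul u p : in_ideal R p -> in_ideal R (lmul_word u p).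
Proof.
move=> /in_idealP[l lR /ncequivP e]; apply/in_idealP.
exists [seq (t.1.1.1, u ++ t.1.1.2, t.1.2, t.2) | t <- l] => [t /mapP[t' /lR ? ->] //|].
apply/ncequivP => G; rewrite ncpair_lmul e !ncpair_ideal_comb big_map.
by apply: eq_bigr => t _; congr (_ * _); apply: eq_ncpair => v; rewrite catA.
Qed.

Lemma in_ideal_rmul p u : in_ideal R p -> in_ideal R (rmul_word p u).
Proof.
move=> /in_idealP[l lR /ncequivP e]; apply/in_idealP.
exists [seq (t.1.1.1, t.1.1.2, t.1.2, t.2 ++ u) | t <- l] => [t /mapP[t' /lR ? ->] //|].
apply/ncequivP => G; rewrite ncpair_rmul e !ncpair_ideal_comb big_map.
by apply: eq_bigr => t _; congr (_ * _); apply: eq_ncpair => v; rewrite !catA.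
Qed.

Lemma ncequiv_eqmod p r : ncequiv p r -> nceqmod R p r.
Proof.
move=> /ncequivP e; apply/in_idealP; exists [::] => // w.
by rewrite !nccoefE ncpair_sub e subrr /ncpair big_nil.
Qed.

Lemma nceqmod_refl p : nceqmod R p p.
Proof. exact: ncequiv_eqmod. Qed.

Lemma nceqmod_trans p r s : nceqmod R p r -> nceqmod R r s -> nceqmod R p s.
Proof.
move=> e1 e2; apply: in_ideal_equiv (in_ideal_cat e1 e2); apply/ncequivP => G.
by rewrite ncpair_cat !ncpair_sub addrA subrK.
Qed.

Lemma nceqmod_cat p p' r r' :
  nceqmod R p p' -> nceqmod R r r' -> nceqmod R (p ++ r) (p' ++ r').
Proof.
move=> e1 e2; apply: in_ideal_equiv (in_ideal_cat e1 e2); apply/ncequivP => G.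
rewrite ncpair_cat !ncpair_sub !ncpair_cat; ring.
Qed.

Lemma nceqmod_scale c p p' : nceqmod R p p' -> nceqmod R (ncscale c p) (ncscale c p').
Proof.
move=> e; apply: in_ideal_equiv (in_ideal_scale c e); apply/ncequivP => G.
by rewrite ncpair_scale !ncpair_sub !ncpair_scale mulrBr.
Qed.

Lemma nceqmod_lmul u p p' :
  nceqmod R p p' -> nceqmod R (lmul_word u p) (lmul_word u p').
Proof.
move=> e; apply: in_ideal_equiv (in_ideal_lmul u e); apply/ncequivP => G.
by rewrite ncpair_lmul !ncpair_sub !ncpair_lmul.
Qed.

Lemma nceqmod_rmul p p' u :
  nceqmod R p p' -> nceqmod R (rmul_word p u) (rmul_word p' u).
Proof.
move=> e; apply: in_ideal_equiv (in_ideal_rmul u e); apply/ncequivP => G.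
by rewrite ncpair_rmul !ncpair_sub !ncpair_rmul.
Qed.

Lemma nceqmod_lin (Y : Type) (L L' : seq Y -> ncpoly X) (p : ncpoly Y) :
  (forall u, nceqmod R (L u) (L' u)) -> nceqmod R (nclin L p) (nclin L' p).
Proof.
move=> eL; elim: p => [|t p IH]; first exact: ncequiv_eqmod.
exact: nceqmod_cat (nceqmod_scale _ (eL _)) IH.
Qed.

Lemma nceqmod_catr_ideal p y : in_ideal R y -> nceqmod R (p ++ y) p.
Proof.
move=> Ry; apply: in_ideal_equiv Ry; apply/ncequivP => G.
by rewrite ncpair_sub ncpair_cat addrAC subrr add0r.
Qed.

Lemma nceqmod_lin_homog (Y : eqType) (A B D : seq Y -> ncpoly X)
    (Q : seq Y -> kfield) (c Q0 : kfield) (x : ncpoly Y) :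
  (forall u, nceqmod R (A u) (ncscale (Q u) (B u) ++ ncscale (c * Q u) (D u))) ->
  (forall u, nccoef x u != 0 -> Q u = Q0) ->
  nceqmod R (nclin A x) (ncscale Q0 (nclin B x) ++ ncscale (c * Q0) (nclin D x)).
Proof.
move=> eA homQ; apply: nceqmod_trans (nceqmod_lin x eA) _.
apply/ncequiv_eqmod/ncequivP => G.
rewrite ncpair_lin ncpair_cat !ncpair_scale !ncpair_lin.
under eq_ncpair => v do
  rewrite ncpair_cat !ncpair_scale [c * _]mulrC -mulrA -mulrDr.
by rewrite (ncpair_homog _ homQ) ncpairDr ncpairZr; ring.
Qed.

End Ideal.

Lemma qi_neq0 (I : Type) (d : I -> nat) (i : I) : qi d i != 0.
Proof. by rewrite !expf_neq0 // tofrac_eq0 polyX_eq0. Qed.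

Lemma iota0S n : iota 0 n.+1 = 0%N :: map S (iota 0 n).
Proof. by rewrite /= -[1%N]/(1 + 0)%N iotaDl. Qed.

Section Derivations.
Variables (I : finType) (C : I -> I -> int) (d : I -> nat) (i : I).

(* [q_i^{-<h_i, wt u>}] for the word [u] of [U_q^-], where [wt f_j = - alpha_j]. *)
Definition comm_factor (u : seq I) : kfield := qi d i ^ (\sum_(t <- u) C i t).

Lemma comm_factor_cons j u : comm_factor (j :: u) = qi d i ^ C i j * comm_factor u.
Proof. by rewrite /comm_factor big_cons exprzDr // unitfE qi_neq0. Qed.

Lemma comm_factor_neq0 u : comm_factor u != 0.
Proof. exact/expfz_neq0/qi_neq0. Qed.

Lemma ncpair_estar_word_cons j u G :
  ncpair (estar_word C d i (j :: u)) G =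
  (if j == i then (comm_factor u)^-1 * G u else 0) +
  ncpair (estar_word C d i u) (fun v => G (j :: v)).
Proof.
rewrite /estar_word [size _]/= iota0S /= filter_map /ncpair [j == i]eq_sym.
case: eqP => _; rewrite ?big_cons !big_map /=; last by rewrite add0r.
by rewrite drop0 invr_expz.
Qed.

Lemma ncpair_eprime_word_cons j u G :
  ncpair (eprime_word C d i (j :: u)) G =
  (if j == i then G u else 0) +
  (qi d i ^ C i j)^-1 * ncpair (eprime_word C d i u) (fun v => G (j :: v)).
Proof.
have qi_unit : qi d i \is a GRing.unit by rewrite unitfE qi_neq0.
rewrite /eprime_word [size _]/= iota0S /= filter_map /ncpair mulr_sumr [j == i]eq_sym.
have shift s : qi d i ^ (- \sum_(t <- take s.+1 (j :: u)) C i t) =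
               (qi d i ^ C i j)^-1 * qi d i ^ (- \sum_(t <- take s u) C i t).
  by rewrite /= big_cons opprD exprzDr // invr_expz.
case: eqP => _; rewrite ?big_cons !big_map /=.
  rewrite big_nil oppr0 expr0z mul1r drop0; congr (_ + _).
  by apply: eq_bigr => s _; rewrite shift mulrA.
by rewrite add0r; apply: eq_bigr => s _; rewrite shift mulrA.
Qed.

End Derivations.

Definition at_level (I : Type) (m : int) (j : I) : I * int := (j, m).

Lemma ncpair_phi (I : Type) m (p : ncpoly I) G :
  ncpair (phi m p) G = ncpair p (fun v => G (map (at_level m) v)).
Proof. exact: ncpair_map. Qed.

Lemma at_level_inj (I : Type) (m : int) : injective (@at_level I m).
Proof. by move=> a b []. Qed.

Section Embedding.
Variables (I : finType) (C : I -> I -> int) (d : I -> nat).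

Lemma phi_serre_rel m a b :
  phi m (serre_rel C d id a b) = serre_rel C d (at_level m) a b.
Proof.
rewrite /phi /serre_rel map_flatten -map_comp; congr flatten; apply: eq_map => r /=.
by rewrite map_cat map_nseq /= map_nseq.
Qed.

Lemma in_ideal_phi m p : in_ideal (RU C d) p -> in_ideal (RA C d) (phi m p).
Proof.
move=> /in_idealP[l lR /ncequivP e]; apply/in_idealP.
exists [seq (t.1.1.1, map (at_level m) t.1.1.2, phi m t.1.2, map (at_level m) t.2)
       | t <- l].
  move=> _ /mapP[t /lR[a [b [ab ->]]] ->]; left.
  by exists m, a, b; rewrite phi_serre_rel.
apply/ncequivP => G; rewrite ncpair_phi e !ncpair_ideal_comb big_map.
apply: eq_bigr => t _; rewrite ncpair_phi; congr (_ * _); apply: eq_ncpair => v.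
by rewrite !map_cat.
Qed.

Lemma nccoef_phi m (p : ncpoly I) v :
  nccoef (phi m p) (map (at_level m) v) = nccoef p v.
Proof.
rewrite !nccoefE ncpair_phi; apply: eq_ncpair => w.
by rewrite (inj_eq (inj_map (@at_level_inj _ m))).
Qed.

End Embedding.

Definition qcorr (I : Type) (d : I -> nat) (i : I) : kfield := (qi d i ^+ 2)^-1 - 1.

Lemma qcorr_sq (I : Type) (d : I -> nat) (i : I) :
  qcorr d i * qi d i ^+ 2 = 1 - qi d i ^+ 2.
Proof. by rewrite mulrBl mulVf ?mul1r // expf_neq0 // qi_neq0. Qed.

Definition parity_sign (m : int) : int := if odd (absz m) then 1 else -1.

Lemma odd_absz_addz1 (m : int) : odd (absz (m + 1)) = ~~ odd (absz m).
Proof.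
case: m => n; first by rewrite -PoszD addn1.
rewrite NegzE -addn1 PoszD opprD addrNK abszN /=.
by rewrite -opprD abszN -PoszD addn1 /= negbK.
Qed.

Lemma parity_sign_addz1 m : parity_sign m * parity_sign (m + 1) = -1.
Proof. by rewrite /parity_sign odd_absz_addz1; case: (odd _). Qed.

Lemma parity_sign_subz1 m : parity_sign m * parity_sign (m - 1) = -1.
Proof. by rewrite -{1}(subrK 1 m) mulrC parity_sign_addz1. Qed.

Section Weights.
Variables (I : finType) (C : I -> I -> int) (d : I -> nat) (i : I).

Lemma sum_cartan_wt_word (w : seq (I * int)) :
  \sum_b C i b * wt_word w b = \sum_(g <- w) parity_sign g.2 * C i g.1.
Proof.
under eq_bigr do rewrite /wt_word mulr_sumr.
rewrite exchange_big; apply: eq_bigr => g _.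
rewrite (bigD1 g.1) //= /wtA eqxx big1 ?addr0 1?mulrC // => b /negbTE.
by rewrite eq_sym => ->; rewrite mulr0.
Qed.

Lemma rform_wt_gen k mu :
  rform C d (wt_word [:: (i, k)]) mu = parity_sign k * (d i)%:Z * \sum_b C i b * mu b.
Proof.
rewrite /rform (bigD1 i) //= [X in _ + X]big1 => [|a ai]; last first.
  by rewrite big1 // => b _; rewrite /wt_word big_seq1 /wtA /= eq_sym (negbTE ai) !mul0r.
rewrite addr0 /wt_word big_seq1 /wtA eqxx mulr_sumr.
by apply: eq_bigr => b _; rewrite !mulrA.
Qed.

Lemma qpow_wt_form k m u (ga : I -> int) :
  parity_sign k * parity_sign m = -1 -> wt_word (map (at_level m) u) =1 ga ->
  q ^ (- rform C d (wt_word [:: (i, k)]) ga) = comm_factor C d i u.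
Proof.
move=> sign_km wt_u; rewrite rform_wt_gen.
under eq_bigr do rewrite -wt_u.
rewrite sum_cartan_wt_word big_map -mulr_sumr.
set S := \sum_(t <- u) C i t.
have -> : - (parity_sign k * (d i)%:Z * (parity_sign m * S)) = (d i)%:Z * S.
  by rewrite -[RHS]mul1r -(opprK 1) -sign_km; ring.
by rewrite /comm_factor /qi exprnP exprz_exp.
Qed.

End Weights.

Section Commutation.
Variables (I : finType) (C : I -> I -> int) (d : I -> nat).

Lemma nceqmod_swap a b m M :
  nceqmod (RA C d) (ncword ((a, m) :: (b, m + 1) :: M))
    (ncscale (qi d a ^ C a b) (ncword ((b, m + 1) :: (a, m) :: M)) ++
     ncscale (if a == b then 1 - qi d a ^+ 2 else 0) (ncword M)).
Proof.
have rel : RA C d (ncsub (ncword [:: (a, m); (b, m + 1)])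
    (ncadd (ncscale (qi d a ^ C a b) (ncword [:: (b, m + 1); (a, m)]))
           (ncconst _ (if a == b then 1 - qi d a ^+ 2 else 0)))).
  by right; right; exists a, b, m.
apply: nceqmod_trans (nceqmod_rmul M (in_ideal_rel rel)) _.
apply/ncequiv_eqmod/ncequivP => G.
by rewrite ncpair_rmul /ncadd !ncpair_cat !ncpair_scale ncpair_const !ncpair_word.
Qed.

Variables (i : I) (k : int).
Hypothesis Cii : C i i = 2.

Lemma commute_word_up u :
  nceqmod (RA C d) (ncword ((i, k) :: map (at_level (k + 1)) u))
    (ncscale (comm_factor C d i u) (ncword (map (at_level (k + 1)) u ++ [:: (i, k)])) ++
     ncscale (qcorr d i * comm_factor C d i u) (phi (k + 1) (estar_word C d i u))).
Proof.
elim: u => [|j u IH].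
  apply/ncequiv_eqmod/ncequivP => G.
  rewrite ncpair_cat !ncpair_scale !ncpair_word /comm_factor big_nil.
  by rewrite /ncpair big_nil !mulr0 addr0 mul1r.
set M := map (at_level (k + 1)) u.
apply: nceqmod_trans (nceqmod_swap i j k M) _.
apply: nceqmod_trans (nceqmod_cat (nceqmod_scale _ (nceqmod_lmul [:: (j, k + 1)] IH))
                                  (nceqmod_refl _ (ncscale _ (ncword M)))) _.
apply/ncequiv_eqmod/ncequivP => G.
rewrite !ncpair_cat !ncpair_scale ncpair_lmul ncpair_cat !ncpair_scale !ncpair_word.
rewrite !ncpair_phi ncpair_estar_word_cons comm_factor_cons [j == i]eq_sym.
have Q0 := comm_factor_neq0 C d i u.
(* Give [f_{j,k+1}] a single syntactic form, so that [ring] sees equal atoms. *)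
rewrite -[(j, k + 1)]/(at_level (k + 1) j).
have [<- | _] /= := eqVneq i j; last by ring.
rewrite Cii -[qi d i ^ 2]/(qi d i ^+ 2) [qcorr d i * _ * (_ + _)]mulrDr.
rewrite [qcorr d i * _ * (_^-1 * _)]mulrA.
by rewrite -[qcorr d i * _ * _^-1]mulrA mulfK // qcorr_sq; ring.
Qed.

Lemma commute_homog_up x ga :
  homogeneous (phi (k + 1) x) ga -> in_ideal (RU C d) (estar C d i x) ->
  nceqmod (RA C d) (ncmul (ncword [:: (i, k)]) (phi (k + 1) x))
    (ncscale (q ^ (- rform C d (wt_word [:: (i, k)]) ga))
             (ncmul (phi (k + 1) x) (ncword [:: (i, k)]))).
Proof.
move=> x_homog estar_x_eq0; set Q0 := q ^ _.
have Q_const v : nccoef x v != 0 -> comm_factor C d i v = Q0.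
  move=> v_supp; symmetry; apply: qpow_wt_form (parity_sign_addz1 k) _ => a.
  by apply: x_homog; rewrite nccoef_phi.
apply: nceqmod_trans (nceqmod_trans _ (nceqmod_lin_homog commute_word_up Q_const)) _.
  apply/ncequiv_eqmod/ncequivP => G; rewrite ncpair_mull ncpair_phi ncpair_lin.
  by apply: eq_ncpair => v; rewrite ncpair_word.
have := in_ideal_scale (qcorr d i * Q0) (in_ideal_phi (k + 1) estar_x_eq0).
move=> /(nceqmod_catr_ideal (ncscale Q0 (ncmul (phi (k + 1) x) (ncword [:: (i, k)])))).
apply: nceqmod_trans; apply/ncequiv_eqmod/ncequivP => G.
rewrite !ncpair_cat !ncpair_scale ncpair_mulr !ncpair_lin !ncpair_phi ncpair_lin.
by congr (_ * _ + _ * _); apply: eq_ncpair => v; rewrite ?ncpair_word ?ncpair_phi.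
Qed.

Hypothesis C_sym : forall a b, (d a)%:Z * C a b = (d b)%:Z * C b a.

Lemma qi_pow_sym j : qi d j ^ C j i = qi d i ^ C i j.
Proof. by rewrite /qi !exprnP !exprz_exp C_sym. Qed.

Lemma commute_word_down u :
  nceqmod (RA C d) (ncword (map (at_level (k - 1)) u ++ [:: (i, k)]))
    (ncscale (comm_factor C d i u) (ncword ((i, k) :: map (at_level (k - 1)) u)) ++
     ncscale (qcorr d i * comm_factor C d i u) (phi (k - 1) (eprime_word C d i u))).
Proof.
elim: u => [|j u IH].
  apply/ncequiv_eqmod/ncequivP => G.
  rewrite ncpair_cat !ncpair_scale !ncpair_word /comm_factor big_nil.
  by rewrite /ncpair big_nil !mulr0 addr0 mul1r.
set M := map (at_level (k - 1)) u.
have swap := nceqmod_swap j i (k - 1) M; rewrite subrK in swap.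
apply: nceqmod_trans (nceqmod_lmul [:: (j, k - 1)] IH) _.
apply: nceqmod_trans (nceqmod_cat (nceqmod_scale (comm_factor C d i u) swap)
    (nceqmod_refl _ (lmul_word [:: (j, k - 1)] (ncscale (qcorr d i * comm_factor C d i u)
                                                 (phi (k - 1) (eprime_word C d i u)))))) _.
apply/ncequiv_eqmod/ncequivP => G.
rewrite !ncpair_cat !ncpair_scale ncpair_cat !ncpair_scale !ncpair_word.
rewrite ncpair_lmul ncpair_scale.
rewrite !ncpair_phi ncpair_eprime_word_cons comm_factor_cons qi_pow_sym.
rewrite -[(j, k - 1)]/(at_level (k - 1) j).
have c0 := expfz_neq0 (C i j) (qi_neq0 d i).
rewrite [qcorr d i * _ * (_ + _)]mulrDr [qcorr d i * _ * (_^-1 * _)]mulrA.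
rewrite (mulrC (qi d i ^ C i j) (comm_factor C d i u)).
rewrite [qcorr d i * (_ * _)]mulrA mulfK //.
have [-> | _] /= := eqVneq j i; last by ring.
by rewrite Cii -[qi d i ^ 2]/(qi d i ^+ 2) -qcorr_sq; ring.
Qed.

Lemma commute_homog_down y ga :
  homogeneous (phi (k - 1) y) ga -> in_ideal (RU C d) (eprime C d i y) ->
  nceqmod (RA C d) (ncmul (phi (k - 1) y) (ncword [:: (i, k)]))
    (ncscale (q ^ (- rform C d (wt_word [:: (i, k)]) ga))
             (ncmul (ncword [:: (i, k)]) (phi (k - 1) y))).
Proof.
move=> y_homog eprime_y_eq0; set Q0 := q ^ _.
have Q_const v : nccoef y v != 0 -> comm_factor C d i v = Q0.
  move=> v_supp; symmetry; apply: qpow_wt_form (parity_sign_subz1 k) _ => a.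
  by apply: y_homog; rewrite nccoef_phi.
apply: nceqmod_trans (nceqmod_trans _ (nceqmod_lin_homog commute_word_down Q_const)) _.
  apply/ncequiv_eqmod/ncequivP => G; rewrite ncpair_mulr ncpair_phi ncpair_lin.
  by apply: eq_ncpair => v; rewrite ncpair_word.
have := in_ideal_scale (qcorr d i * Q0) (in_ideal_phi (k - 1) eprime_y_eq0).
move=> /(nceqmod_catr_ideal (ncscale Q0 (ncmul (ncword [:: (i, k)]) (phi (k - 1) y)))).
apply: nceqmod_trans; apply/ncequiv_eqmod/ncequivP => G.
rewrite !ncpair_cat !ncpair_scale ncpair_mull !ncpair_lin !ncpair_phi ncpair_lin.
by congr (_ * _ + _ * _); apply: eq_ncpair => v; rewrite ?ncpair_word ?ncpair_phi.
Qed.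

End Commutation.

Theorem lemma6p2 (I : finType) (C : I -> I -> int) (d : I -> nat)
  (hC : is_finite_cartan C d) (i : I) (k : int) :
  (* (i) u = phi_{k+1}(x) in \hat A_[k+1], homogeneous of weight ga, e*_i(u) = 0 *)
  (forall (x : ncpoly I) (ga : I -> int),
     homogeneous (phi (k + 1) x) ga ->
     in_ideal (RU C d) (estar C d i x) ->
     nceqmod (RA C d)
       (ncmul (ncword [:: (i, k)]) (phi (k + 1) x))
       (ncscale (q ^ (- rform C d (wt_word [:: (i, k)]) ga))
                (ncmul (phi (k + 1) x) (ncword [:: (i, k)]))))
  /\
  (* (ii) v = phi_{k-1}(y) in \hat A_[k-1], homogeneous of weight ga, e'_i(v) = 0 *)
  (forall (y : ncpoly I) (ga : I -> int),
     homogeneous (phi (k - 1) y) ga ->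
     in_ideal (RU C d) (eprime C d i y) ->
     nceqmod (RA C d)
       (ncmul (phi (k - 1) y) (ncword [:: (i, k)]))
       (ncscale (q ^ (- rform C d (wt_word [:: (i, k)]) ga))
                (ncmul (ncword [:: (i, k)]) (phi (k - 1) y)))).
Proof.
have Cii := cartan_diag hC i.
have C_sym := cartan_symmetrizable hC.
by split=> [x ga | y ga]; [apply: commute_homog_up | apply: commute_homog_down].
Qed.
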